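(* Let $K$ be a local field whose residue field has size $q$. Every congruence class in $T_\infty(K)/I_q(K)$ has a unique $q$-simplified representative, and if $f\equiv g\bmod I_q(K)$ with $g$ $q$-simplified, then $|f\bmod I_q(K)|_{\mathrm{res}}=|g|$.
   Context: A local field is a field complete with respect to a nontrivial discrete nonarchimedean absolute value with finite residue field. $T_\infty(K)=K\langle X_1,X_2,\dots\rangle$ is the set of formal power series $f=\sum_i a_i\underline X^i$ in countably many indeterminates (indices $i$ ranging over finitely supported sequences of nonnegative integers, $\underline X^i$ the corresponding monomial) such that $a_i\to0$, i.e. for every $\varepsilon>0$ only finitely many $|a_i|\ge\varepsilon$; it is a $K$-algebra normed by $|f|=\sup_i|a_i|$. $I_q(K)$ is the closure of the ideal generated by all $X_j^q-X_j$. For a closed ideal $I$, $|f\bmod I|_{\mathrm{res}}=\inf_{h\in I}|f+h|$. A series is $q$-simplified if in each monomial with nonzero coefficient every exponent is at most $q-1$. *)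

From HB Require Import structures.
From mathcomp Require Import all_boot all_order all_algebra.
From mathcomp Require Import boolp classical_sets reals.
From Stdlib Require List.
Set Implicit Arguments.
Unset Strict Implicit.
Unset Printing Implicit Defensive.
Import Order.TTheory GRing.Theory Num.Theory.
Local Open Scope ring_scope.
Local Open Scope classical_set_scope.

Section Defs.
Variables (R : realType) (K : fieldType) (absv : K -> R).

Definition nonarch_absval : Prop :=
  [/\ forall x, 0 <= absv x,
      forall x, absv x = 0 <-> x = 0,
      forall x y, absv (x * y) = absv x * absv y &
      forall x y, absv (x + y) <= Num.max (absv x) (absv y)].

Definition nontrivial_discrete : Prop :=
  exists pi : K, 0 < absv pi < 1 /\
    forall x, x != 0 -> exists n : int, absv x = absv pi ^ n.

Definition complete_absval : Prop :=
  forall u : nat -> K,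
    (forall eps : R, 0 < eps -> exists N, forall m n, (N <= m)%N -> (N <= n)%N ->
        absv (u m - u n) < eps) ->
    exists l : K, forall eps : R, 0 < eps -> exists N, forall n, (N <= n)%N ->
        absv (u n - l) < eps.

(** The residue field O/m (O = {|x| <= 1}, m = {|x| < 1}) has exactly q
    elements: there is a list of q elements of O, pairwise distinct mod m,
    meeting every class of O mod m. *)
Definition residue_size (q : nat) : Prop :=
  exists s : seq K,
    [/\ size s = q,
        forall i, (i < q)%N -> absv (nth 0 s i) <= 1,
        forall i j, (i < q)%N -> (j < q)%N -> absv (nth 0 s i - nth 0 s j) < 1 -> i = j &
        forall x, absv x <= 1 -> exists2 i, (i < q)%N & absv (x - nth 0 s i) < 1].

Definition is_local_field (q : nat) : Prop :=
  [/\ nonarch_absval, nontrivial_discrete, complete_absval & residue_size q].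
End Defs.

(** Monomials in X_0, X_1, ...: finitely supported exponent sequences. *)
Record mon := Mon { expo : nat -> nat ;
                    expo_fin : exists N, forall j, (N <= j)%N -> expo j = 0%N }.

Lemma decr_fin (k : mon) (j m : nat) :
  exists N, forall l, (N <= l)%N ->
    (fun l => if l == j then (expo k l - m)%N else expo k l) l = 0%N.
Proof.
case: k => e [N HN] /=; exists N => l Hl.
by case: eqP => _; rewrite HN.
Qed.

Definition decr (k : mon) (j m : nat) : mon :=
  Mon (decr_fin k j m).

Section Series.
Variables (R : realType) (K : fieldType) (absv : K -> R).

(** formal power series: coefficient families indexed by monomials *)
Definition ser := mon -> K.

Definition in_Tinf (f : ser) : Prop :=
  forall eps : R, 0 < eps -> exists l : seq mon,
    forall i, eps <= absv (f i) -> List.In i l.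

Definition tnorm (f : ser) : R := sup (range (fun i => absv (f i))).

Definition mulXpow (j m : nat) (h : ser) : ser :=
  fun k => if (m <= expo k j)%N then h (decr k j m) else 0.

Definition gen_term (q j : nat) (h : ser) : ser :=
  fun k => mulXpow j q h k - mulXpow j 1 h k.

Definition in_gen_ideal (q : nat) (g : ser) : Prop :=
  exists l : seq (nat * ser),
    (forall p, List.In p l -> in_Tinf p.2) /\
    g = fun k => \sum_(p <- l) gen_term q p.1 p.2 k.

Definition in_Iq (q : nat) (f : ser) : Prop :=
  in_Tinf f /\
  forall eps : R, 0 < eps -> exists g, in_gen_ideal q g /\
    tnorm (fun k => f k - g k) < eps.

Definition q_simplified (q : nat) (g : ser) : Prop :=
  forall i, g i != 0 -> forall j, (expo i j <= q.-1)%N.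

Definition res_norm (q : nat) (f : ser) : R :=
  inf [set tnorm (fun k => f k + h k) | h in in_Iq q].
End Series.

From HB Require Import structures.
From mathcomp Require Import all_boot all_order all_algebra.
From mathcomp Require Import boolp classical_sets reals.
From Stdlib Require List.
From mathcomp Require Import ring lra zify.
Import Order.TTheory GRing.Theory Num.Theory.
Local Open Scope ring_scope.
Set Implicit Arguments.
Unset Strict Implicit.
Unset Printing Implicit Defensive.

(** For [e > 0] one has [X^e = X^(redn e)] modulo [X^q - X], where
    [redn e = 1 + (e - 1) mod (q - 1)]; applied to every exponent this gives a
    reduction [red] of monomials whose fixed points are the q-simplified ones.
    In the complete ultrametric field K every null family is unconditionally
    summable, so each [f] in [T_oo] has fiber sums [sum_(red k = m) f_k].  These
    vanish on the generators [h (X_j^q - X_j)], because [X_j^q X^s] and [X_j X^s]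
    lie in the same fiber, hence, by continuity, on all of [I_q]; and a
    q-simplified [g] has fiber sums [g_m].  Thus the series of fiber sums of [f]
    is the only q-simplified series congruent to [f] (the congruence comes from
    approximating [f] by finite sums of [a (X^k - X^(red k))]), and
    [|g_m| <= |f + h|] for every [h] in [I_q].  Of the local field only
    completeness, the ultrametric inequality and [q >= 2] are used. *)

HB.instance Definition _ := gen_eqMixin mon.

Lemma InP (T : eqType) (x : T) (s : seq T) : List.In x s <-> x \in s.
Proof.
elim: s => [|a s IH] /=; first by split.
rewrite in_cons; split.
  by case=> [->|/IH ->]; rewrite ?eqxx ?orbT.
by case/orP=> [/eqP ->|/IH]; [left|right].
Qed.

Lemma big_supp_uniq (I : eqType) (V : nmodType) (L1 L2 : seq I) (P : pred I)
    (F : I -> V) :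
  uniq L1 -> uniq L2 ->
  (forall i, F i != 0 -> i \in L1) -> (forall i, F i != 0 -> i \in L2) ->
  \sum_(i <- L1 | P i) F i = \sum_(i <- L2 | P i) F i.
Proof.
move=> u1 u2 s1 s2; apply: perm_big_supp; apply: uniq_perm; rewrite ?filter_uniq //.
by move=> i; rewrite !mem_filter; case: (boolP (F i != 0)) => //= /[dup] /s1 -> /s2 ->.
Qed.

Lemma inf_attained (R : realType) (E : set R) x : E x -> lbound E x -> inf E = x.
Proof.
move=> Ex lbx; apply/le_anti; rewrite lb_le_inf ?andbT //; last by exists x.
by apply: (ge_inf (ex_intro _ x lbx)).
Qed.

Section Ultrametric.
Variables (R : realType) (K : fieldType) (absv : K -> R).
Hypothesis habs : nonarch_absval absv.

Lemma absv_ge0 x : 0 <= absv x. Proof. by case: habs. Qed.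
Lemma absv_eq0 x : absv x = 0 <-> x = 0. Proof. by case: habs. Qed.
Lemma absvM x y : absv (x * y) = absv x * absv y. Proof. by case: habs. Qed.
Lemma absvD_max x y : absv (x + y) <= Num.max (absv x) (absv y).
Proof. by case: habs. Qed.

Lemma absv0 : absv 0 = 0. Proof. exact/absv_eq0. Qed.

Lemma absv_gt0 x : x != 0 -> 0 < absv x.
Proof. by move=> nz; rewrite lt_def absv_ge0 andbT; apply: contra nz => /eqP/absv_eq0 ->. Qed.

Lemma absv1 : absv 1 = 1.
Proof.
have nz : absv 1 != 0 by apply/eqP => /absv_eq0/eqP; rewrite oner_eq0.
by apply: (mulfI nz); rewrite -absvM !mulr1.
Qed.

Lemma absvN x : absv (- x) = absv x.
Proof.
have /eqP : absv (-1) ^+ 2 = 1 by rewrite expr2 -absvM mulrNN mulr1 absv1.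
by rewrite pexpr_eq1 ?absv_ge0 // => /eqP N1; rewrite -mulN1r absvM N1 mul1r.
Qed.

Lemma absvD_lt x y (c : R) : absv x < c -> absv y < c -> absv (x + y) < c.
Proof. by move=> hx hy; apply: le_lt_trans (absvD_max x y) _; rewrite gt_max hx hy. Qed.

Lemma absvB_lt x y (c : R) : absv x < c -> absv y < c -> absv (x - y) < c.
Proof. by move=> hx hy; apply: absvD_lt; rewrite ?absvN. Qed.

Lemma absv_sum_le (I : Type) (s : seq I) (P : pred I) (F : I -> K) (c : R) :
  0 <= c -> (forall i, P i -> absv (F i) <= c) -> absv (\sum_(i <- s | P i) F i) <= c.
Proof.
move=> c0; apply: (big_ind (fun x => absv x <= c)); first by rewrite absv0.
by move=> x y hx hy; apply: le_trans (absvD_max x y) _; rewrite ge_max hx hy.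
Qed.

Lemma absv_sum_lt (I : Type) (s : seq I) (P : pred I) (F : I -> K) (c : R) :
  0 < c -> (forall i, P i -> absv (F i) < c) -> absv (\sum_(i <- s | P i) F i) < c.
Proof.
move=> c0; apply: (big_ind (fun x => absv x < c)); first by rewrite absv0.
by move=> x y; apply: absvD_lt.
Qed.

Definition large_part (I : Type) (c : R) (F : I -> K) : I -> K :=
  fun i => if c <= absv (F i) then F i else 0.

Lemma absv_sub_large_part (I : Type) (c : R) (F : I -> K) i :
  0 < c -> absv (F i - large_part c F i) < c.
Proof. by rewrite /large_part; case: ifP => [_|/negbT]; rewrite ?subrr ?absv0 // subr0 -ltNge. Qed.

Lemma absv_big_cover_sub (I : eqType) (P : pred I) (F : I -> K) (c : R) L1 L2 :
  0 < c -> uniq L1 -> uniq L2 ->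
  (forall i, c <= absv (F i) -> i \in L1) -> (forall i, c <= absv (F i) -> i \in L2) ->
  absv (\sum_(i <- L1 | P i) F i - \sum_(i <- L2 | P i) F i) < c.
Proof.
move=> c0 u1 u2 s1 s2.
have split_large L : \sum_(i <- L | P i) F i =
    \sum_(i <- L | P i) large_part c F i + \sum_(i <- L | P i) (F i - large_part c F i).
  by rewrite -big_split; apply: eq_bigr => i _ /=; rewrite addrCA subrr addr0.
have large_supp (L : seq I) : (forall i, c <= absv (F i) -> i \in L) ->
    forall i, large_part c F i != 0 -> i \in L.
  by move=> sL i; rewrite /large_part; case: ifP => [/sL|]; rewrite ?eqxx.
rewrite !split_large (big_supp_uniq P u1 u2 (large_supp _ s1) (large_supp _ s2)).
rewrite opprD addrACA subrr add0r.
by apply: absvB_lt; apply: absv_sum_lt => // i _; apply: absv_sub_large_part.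
Qed.

End Ultrametric.

Lemma residue_size_ge2 (R : realType) (K : fieldType) (absv : K -> R) q :
  nonarch_absval absv -> residue_size absv q -> (2 <= q)%N.
Proof.
move=> habs [s [_ _ _ cover]].
have /cover [i0 i0q h0] : absv 0 <= 1 by rewrite absv0 // ler01.
have /cover [i1 i1q h1] : absv 1 <= 1 by rewrite absv1.
have : i0 != i1.
  apply/eqP => E; move: h1; rewrite -E => h1.
  by have := absvB_lt habs h1 h0; rewrite sub0r opprK subrK absv1 // ltxx.
lia.
Qed.

Definition mon0 : mon := @Mon (fun _ => 0%N) (ex_intro _ 0%N (fun _ _ => erefl)).

Lemma monP (a b : mon) : (forall l, expo a l = expo b l) -> a = b.
Proof.
case: a b => ea pa [eb pb] /= /funext E; subst eb.
by rewrite (Prop_irrelevance pa pb).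
Qed.

Lemma incr_fin (k : mon) (j e : nat) :
  exists N, forall l, (N <= l)%N ->
    (fun l => if l == j then (expo k l + e)%N else expo k l) l = 0%N.
Proof.
case: k => f [N HN] /=; exists (maxn N j.+1) => l; rewrite geq_max => /andP[lN jl].
by case: eqP => [E|_]; [rewrite E ltnn in jl|rewrite HN].
Qed.

Definition incr (k : mon) (j e : nat) : mon := Mon (incr_fin k j e).

Lemma expo_incr k j e : expo (incr k j e) j = (expo k j + e)%N.
Proof. by rewrite /= eqxx. Qed.

Lemma incr_decr k j e : (e <= expo k j)%N -> incr (decr k j e) j e = k.
Proof. by move=> le; apply: monP => l /=; case: eqP => [->|//]; rewrite subnK. Qed.

Lemma decr_incr k j e : decr (incr k j e) j e = k.
Proof. by apply: monP => l /=; case: eqP => // ->; rewrite addnK. Qed.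

Lemma incr_inj j e : injective (fun k => incr k j e).
Proof. by move=> a b /(congr1 (fun k => decr k j e)); rewrite !decr_incr. Qed.

Section Series.
Variables (R : realType) (K : fieldType) (absv : K -> R).
Hypothesis habs : nonarch_absval absv.

Lemma in_TinfP (f : ser K) :
  in_Tinf absv f <->
  forall c : R, 0 < c -> exists L : seq mon, forall k, c <= absv (f k) -> k \in L.
Proof. by split=> Tf c c0; have [L HL] := Tf c c0; exists L => k /HL /InP. Qed.

Lemma Tinf_cover (f : ser K) (c : R) : in_Tinf absv f -> 0 < c ->
  exists2 L : seq mon, uniq L & forall k, c <= absv (f k) -> k \in L.
Proof.
move=> /in_TinfP Tf /Tf [L HL]; exists (undup L); first exact: undup_uniq.
by move=> k /HL; rewrite mem_undup.
Qed.

Lemma Tinf0 : in_Tinf absv (fun _ => 0).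
Proof. by apply/in_TinfP => c c0; exists [::] => k; rewrite absv0 // (lt_geF c0). Qed.

Lemma TinfD (f g : ser K) : in_Tinf absv f -> in_Tinf absv g ->
  in_Tinf absv (fun k => f k + g k).
Proof.
move=> /in_TinfP Tf /in_TinfP Tg; apply/in_TinfP => c c0.
have [[L1 H1] [L2 H2]] := (Tf c c0, Tg c c0).
exists (L1 ++ L2) => k /(le_trans)/(_ (absvD_max habs _ _)).
by rewrite le_max mem_cat => /orP[/H1|/H2] ->; rewrite ?orbT.
Qed.

Lemma TinfN (f : ser K) : in_Tinf absv f -> in_Tinf absv (fun k => - f k).
Proof. by move=> Tf c c0; have [L HL] := Tf c c0; exists L => k; rewrite absvN //; apply: HL. Qed.

Lemma TinfB (f g : ser K) : in_Tinf absv f -> in_Tinf absv g ->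
  in_Tinf absv (fun k => f k - g k).
Proof. by move=> Tf /TinfN; apply: TinfD. Qed.

Lemma Tinf_mulXpow j e (h : ser K) : in_Tinf absv h -> in_Tinf absv (mulXpow j e h).
Proof.
move=> /in_TinfP Th; apply/in_TinfP => c c0; have [L HL] := Th c c0.
exists (map (fun s => incr s j e) L) => k; rewrite /mulXpow.
case: ifP => [le /HL hL|_]; last by rewrite absv0 // (lt_geF c0).
by apply/mapP; exists (decr k j e); rewrite ?incr_decr.
Qed.

Lemma Tinf_gen_term q j (h : ser K) : in_Tinf absv h -> in_Tinf absv (gen_term q j h).
Proof. by move=> Th; apply: TinfB; apply: Tinf_mulXpow. Qed.

Lemma Tinf_ub (f : ser K) : in_Tinf absv f -> has_ubound (range (fun k => absv (f k))).
Proof.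
move=> Tf; have [L uL HL] := Tinf_cover Tf ltr01.
have sum_ge0 (P : pred mon) : 0 <= \sum_(i <- L | P i) absv (f i).
  by apply: sumr_ge0 => i _; apply: absv_ge0.
exists (1 + \sum_(k <- L) absv (f k)) => _ [k _ <-].
case: (leP 1 (absv (f k))) => [/HL kL|lt1]; last by rewrite ltW // ltr_wpDr ?sum_ge0.
by rewrite (bigD1_seq k) //= addrCA ler_wpDr ?addr_ge0 ?sum_ge0.
Qed.

Lemma absv_le_tnorm (f : ser K) k : in_Tinf absv f -> absv (f k) <= tnorm absv f.
Proof. by move=> Tf; apply: (ub_le_sup (Tinf_ub Tf)); exists k. Qed.

Lemma tnorm_le (f : ser K) (c : R) : (forall k, absv (f k) <= c) -> tnorm absv f <= c.
Proof.
by move=> H; apply: ge_sup => [|_ [k _ <-]]; [exists (absv (f mon0)), mon0 | apply: H].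
Qed.

Lemma tnorm_ge0 (f : ser K) : in_Tinf absv f -> 0 <= tnorm absv f.
Proof. by move=> Tf; apply: le_trans (absv_le_tnorm mon0 Tf); apply: absv_ge0. Qed.

Lemma eq_tnorm (f g : ser K) : (forall k, absv (f k) = absv (g k)) ->
  tnorm absv f = tnorm absv g.
Proof. by move=> E; rewrite /tnorm (funext E). Qed.

End Series.

Section Ideal.
Variables (R : realType) (K : fieldType) (absv : K -> R).
Hypothesis habs : nonarch_absval absv.
Variable q : nat.

Definition mono (a : K) (s : mon) : ser K := fun k => if k == s then a else 0.

Lemma Tinf_mono a s : in_Tinf absv (mono a s).
Proof.
apply/in_TinfP => c c0; exists [:: s] => k; rewrite /mono.
by case: eqP => [->|_]; rewrite ?mem_head // absv0 // (lt_geF c0).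
Qed.

Lemma big_mono (F : ser K) (S : seq mon) m : uniq S ->
  \sum_(k <- S) mono (F k) k m = if m \in S then F m else 0.
Proof.
move=> uS; case: ifP => mS.
  rewrite (bigD1_seq m) //= /mono eqxx big1 ?addr0 // => k.
  by rewrite eq_sym => /negbTE ->.
by rewrite big1_seq // => k /andP[_ kS]; rewrite /mono; case: eqP => // mk; rewrite mk kS in mS.
Qed.

Lemma mulXpow_mono j e a s k : mulXpow j e (mono a s) k = mono a (incr s j e) k.
Proof.
rewrite /mulXpow /mono; case: ifP => [le|gt].
  by congr (if _ then _ else _); apply/eqP/eqP => [<-|->]; rewrite ?incr_decr ?decr_incr.
by case: eqP => // E; move: gt; rewrite E expo_incr leq_addl.
Qed.

Lemma gen_term_mono j a s k :
  gen_term q j (mono a s) k = mono a (incr s j q) k - mono a (incr s j 1) k.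
Proof. by rewrite /gen_term !mulXpow_mono. Qed.

Lemma big_mulXpow j e (h : ser K) (S L : seq mon) (P : pred mon) :
  uniq S -> uniq L -> (forall s, h s != 0 -> s \in S) ->
  {subset map (fun s => incr s j e) S <= L} ->
  \sum_(k <- L | P k) mulXpow j e h k = \sum_(s <- S | P (incr s j e)) h s.
Proof.
move=> uS uL sS sL.
have supp k : mulXpow j e h k != 0 -> k \in map (fun s => incr s j e) S.
  rewrite /mulXpow; case: ifP => [le /sS hS|_]; last by rewrite eqxx.
  by apply/mapP; exists (decr k j e); rewrite ?incr_decr.
have uS' : uniq (map (fun s => incr s j e) S) by rewrite map_inj_uniq //; apply: incr_inj.
rewrite (big_supp_uniq P uL uS' (fun k hk => sL _ (supp k hk)) supp) big_map.
by apply: eq_bigr => s _; rewrite /mulXpow expo_incr leq_addl decr_incr.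
Qed.

Lemma Tinf_sum (I : eqType) (s : seq I) (F : I -> ser K) :
  (forall i, i \in s -> in_Tinf absv (F i)) -> in_Tinf absv (fun k => \sum_(i <- s) F i k).
Proof.
elim: s => [_|i s IH HF].
  have -> : (fun k => \sum_(i <- [::]) F i k) = fun _ => 0
    by apply: funext => k; rewrite big_nil.
  exact: Tinf0.
have -> : (fun k => \sum_(j <- i :: s) F j k) = fun k => F i k + \sum_(j <- s) F j k
  by apply: funext => k; rewrite big_cons.
apply: (TinfD habs); first by apply: HF; rewrite mem_head.
by apply: IH => j js; apply: HF; rewrite in_cons js orbT.
Qed.

Lemma gen_Tinf g : in_gen_ideal absv q g -> in_Tinf absv g.
Proof. by case=> l [Hl ->]; apply: Tinf_sum => p /InP /Hl; apply: Tinf_gen_term. Qed.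

Lemma gen_ideal0 : in_gen_ideal absv q (fun _ => 0).
Proof. by exists [::]; split => //; apply: funext => k; rewrite big_nil. Qed.

Lemma gen_ideal_gen_term j h : in_Tinf absv h -> in_gen_ideal absv q (gen_term q j h).
Proof. by exists [:: (j, h)]; split=> [p [<-|]|] //; apply: funext => k; rewrite big_seq1. Qed.

Lemma gen_idealD f g : in_gen_ideal absv q f -> in_gen_ideal absv q g ->
  in_gen_ideal absv q (fun k => f k + g k).
Proof.
case=> [l1 [H1 ->]] [l2 [H2 ->]]; exists (l1 ++ l2); split.
  by move=> p /InP; rewrite mem_cat => /orP[] /InP; [apply: H1 | apply: H2].
by apply: funext => k; rewrite big_cat.
Qed.

Lemma mulXpowN j e (h : ser K) k : mulXpow j e (fun s => - h s) k = - mulXpow j e h k.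
Proof. by rewrite /mulXpow; case: ifP; rewrite ?oppr0. Qed.

Lemma gen_idealN f : in_gen_ideal absv q f -> in_gen_ideal absv q (fun k => - f k).
Proof.
case=> l [Hl ->]; exists (map (fun p => (p.1, fun s => - p.2 s)) l); split.
  by move=> _ /InP /mapP [p /InP hp ->]; apply: (TinfN habs); apply: Hl.
apply: funext => k; rewrite big_map -sumrN; apply: eq_bigr => p _.
by rewrite /gen_term /= !mulXpowN opprD.
Qed.

Lemma gen_ideal_sum (I : Type) (s : seq I) (F : I -> ser K) :
  (forall i, in_gen_ideal absv q (F i)) -> in_gen_ideal absv q (fun k => \sum_(i <- s) F i k).
Proof.
move=> HF; elim: s => [|i s IH].
  have -> : (fun k => \sum_(i <- [::]) F i k) = fun _ => 0
    by apply: funext => k; rewrite big_nil.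
  exact: gen_ideal0.
have -> : (fun k => \sum_(j <- i :: s) F j k) = fun k => F i k + \sum_(j <- s) F j k
  by apply: funext => k; rewrite big_cons.
exact: gen_idealD.
Qed.

Lemma IqN u : in_Iq absv q u -> in_Iq absv q (fun k => - u k).
Proof.
case=> Tu Au; split; first exact: TinfN.
move=> eps e0; have [G [HG NG]] := Au eps e0.
exists (fun k => - G k); split; first exact: gen_idealN.
by rewrite (@eq_tnorm _ _ _ _ (fun k => u k - G k)) // => k; rewrite -opprD absvN.
Qed.

End Ideal.

Section Sums.
Variables (R : realType) (K : fieldType) (absv : K -> R).
Hypothesis habs : nonarch_absval absv.

Definition sums_to (P : pred mon) (f : ser K) (rho : K) : Prop :=
  forall c : R, 0 < c -> exists L0 : seq mon, forall L : seq mon, uniq L -> {subset L0 <= L} ->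
    absv (\sum_(k <- L | P k) f k - rho) < c.

Lemma sums_to_eventually P f rho :
  (exists L0 : seq mon, forall L, uniq L -> {subset L0 <= L} -> \sum_(k <- L | P k) f k = rho) ->
  sums_to P f rho.
Proof. by case=> L0 H c c0; exists L0 => L uL sL; rewrite H // subrr absv0. Qed.

Lemma sums_toD P f g rf rg : sums_to P f rf -> sums_to P g rg ->
  sums_to P (fun k => f k + g k) (rf + rg).
Proof.
move=> Hf Hg c c0; have [[L1 H1] [L2 H2]] := (Hf c c0, Hg c c0).
exists (L1 ++ L2) => L uL sL; rewrite big_split /= opprD addrACA.
by apply: (absvD_lt habs); [apply: H1 | apply: H2] => // k kL; apply: sL; rewrite mem_cat kL ?orbT.
Qed.

Lemma sums_to_unique P f r1 r2 : sums_to P f r1 -> sums_to P f r2 -> r1 = r2.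
Proof.
move=> H1 H2; apply/eqP; rewrite -subr_eq0; apply/negPn/negP => /(absv_gt0 habs) c0.
have [[L1 {}H1] [L2 {}H2]] := (H1 _ c0, H2 _ c0).
have uL := undup_uniq (L1 ++ L2).
have sL1 : {subset L1 <= undup (L1 ++ L2)} by move=> k kL; rewrite mem_undup mem_cat kL.
have sL2 : {subset L2 <= undup (L1 ++ L2)} by move=> k kL; rewrite mem_undup mem_cat kL orbT.
have := absvB_lt habs (H2 _ uL sL2) (H1 _ uL sL1).
by rewrite opprB addrC addrA subrK ltxx.
Qed.

Lemma sums_to_le_tnorm P f rho : in_Tinf absv f -> sums_to P f rho -> absv rho <= tnorm absv f.
Proof.
move=> Tf H; rewrite leNgt; apply/negP => lt.
have c0 : 0 < absv rho by apply: le_lt_trans lt; apply: tnorm_ge0.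
have [L0 {}H] := H _ c0.
have small : absv (\sum_(k <- undup L0 | P k) f k) < absv rho.
  apply: le_lt_trans lt; apply: (absv_sum_le habs); first exact: tnorm_ge0.
  by move=> k _; apply: absv_le_tnorm.
have sL0 : {subset L0 <= undup L0} by move=> k; rewrite mem_undup.
by have := absvB_lt habs small (H _ (undup_uniq _) sL0); rewrite subKr ltxx.
Qed.

Lemma tnorm_le_sums_to (P : mon -> pred mon) (f g : ser K) :
  in_Tinf absv f -> (forall m, sums_to (P m) f (g m)) -> tnorm absv g <= tnorm absv f.
Proof. by move=> Tf H; apply: tnorm_le => m; apply: sums_to_le_tnorm (H m). Qed.

Lemma sums_to_approx P f rho :
  (forall c : R, 0 < c ->
     exists2 f' : ser K, (forall k, absv (f k - f' k) < c) & sums_to P f' rho) ->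
  sums_to P f rho.
Proof.
move=> H c c0; have [f' close Hf'] := H c c0; have [L0 {}Hf'] := Hf' c c0.
exists L0 => L uL sL.
have -> : \sum_(k <- L | P k) f k - rho =
    \sum_(k <- L | P k) (f k - f' k) + (\sum_(k <- L | P k) f' k - rho).
  by rewrite sumrB addrA subrK.
by apply: (absvD_lt habs); [apply: (absv_sum_lt habs) | apply: Hf'].
Qed.

Lemma sums_to_cover P f rho (c : R) L : sums_to P f rho -> 0 < c -> uniq L ->
  (forall k, c <= absv (f k) -> k \in L) -> absv (\sum_(k <- L | P k) f k - rho) < c.
Proof.
move=> H c0 uL sL; have [L0 {}H] := H c c0.
have sLL : {subset L <= undup (L ++ L0)} by move=> k kL; rewrite mem_undup mem_cat kL.
have sL0 : {subset L0 <= undup (L ++ L0)} by move=> k kL; rewrite mem_undup mem_cat kL orbT.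
have cover : forall k, c <= absv (f k) -> k \in undup (L ++ L0) by move=> k /sL /sLL.
have := absvD_lt habs (absv_big_cover_sub habs P c0 uL (undup_uniq _) sL cover)
  (H _ (undup_uniq _) sL0).
by rewrite addrA subrK.
Qed.

Lemma sums_to_exists P f : complete_absval absv -> in_Tinf absv f -> exists rho, sums_to P f rho.
Proof.
move=> hcomp Tf.
have inv_gt0 (n : nat) : (0 : R) < n.+1%:R^-1 by rewrite invr_gt0 ltr0Sn.
have /choice [L HL] : forall n, exists L : seq mon,
    uniq L /\ forall k, n.+1%:R^-1 <= absv (f k) -> k \in L.
  by move=> n; have [L ? ?] := Tinf_cover Tf (inv_gt0 n); exists L.
have cover N n : (N <= n)%N -> forall k, N.+1%:R^-1 <= absv (f k) -> k \in L n.
  move=> Nn k hk; apply: (HL n).2; apply: le_trans hk.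
  by rewrite lef_pV2 ?posrE ?ltr0Sn // ler_nat ltnS.
pose u n := \sum_(k <- L n | P k) f k.
have close N m n : (N <= m)%N -> (N <= n)%N -> absv (u m - u n) < N.+1%:R^-1.
  move=> Nm Nn; apply: (absv_big_cover_sub habs P (inv_gt0 N) (HL m).1 (HL n).1).
    exact: cover Nm.
  exact: cover Nn.
have [rho Hrho] : exists rho, forall eps : R, 0 < eps -> exists N, forall n, (N <= n)%N ->
    absv (u n - rho) < eps.
  apply: hcomp => eps e0; have [N hN] := ltr_add_invr e0; rewrite add0r in hN.
  by exists N => m n Nm Nn; apply: lt_trans hN; apply: close.
exists rho => c c0; have [N hN] := ltr_add_invr c0; rewrite add0r in hN.
have [N1 HN1] := Hrho c c0; pose n := maxn N N1.
exists (L n) => L' uL' sL'.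
have -> : \sum_(k <- L' | P k) f k - rho = (\sum_(k <- L' | P k) f k - u n) + (u n - rho).
  by rewrite addrA subrK.
apply: (absvD_lt habs); last by apply: HN1; rewrite leq_maxr.
apply: lt_trans hN; apply: (absv_big_cover_sub habs P (inv_gt0 N) uL' (HL n).1).
  by move=> k /(cover N n (leq_maxl _ _)) /sL'.
exact: cover (leq_maxl _ _).
Qed.

End Sums.

Section Reduction.
Variable q : nat.
Hypothesis hq : (2 <= q)%N.

Definition redn (e : nat) : nat := if e == 0%N then 0%N else (e.-1 %% q.-1).+1.

Lemma redn_le e : (redn e <= q.-1)%N.
Proof. by rewrite /redn; case: eqP => // _; rewrite ltn_pmod //; lia. Qed.

Lemma redn_id e : (e <= q.-1)%N -> redn e = e.
Proof. by case: e => [//|e] le; rewrite /redn /= modn_small. Qed.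

Lemma redn_shift e : redn (e + q) = redn e.+1.
Proof.
rewrite /redn addn_eq0 /= andbC (_ : (q == 0%N) = false) /=; last by apply/eqP; lia.
by rewrite (_ : (e + q).-1 = e + q.-1)%N ?modnDr //; lia.
Qed.

Lemma redn_fin (k : mon) : exists N, forall l, (N <= l)%N -> redn (expo k l) = 0%N.
Proof. by case: k => f [N HN] /=; exists N => l /HN ->. Qed.

Definition red (k : mon) : mon := Mon (redn_fin k).

Lemma red_id k : (forall j, (expo k j <= q.-1)%N) -> red k = k.
Proof. by move=> le; apply: monP => l; apply: redn_id. Qed.

Lemma red_idem k : red (red k) = red k.
Proof. by apply: red_id => j; apply: redn_le. Qed.

Lemma red_shift s j : red (incr s j q) = red (incr s j 1).
Proof. by apply: monP => l /=; case: eqP => // _; rewrite addn1 redn_shift. Qed.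

End Reduction.

Section Fibers.
Variables (R : realType) (K : fieldType) (absv : K -> R).
Hypothesis habs : nonarch_absval absv.
Variable q : nat.
Hypothesis hq : (2 <= q)%N.

Definition fiber (m : mon) : pred mon := fun k => red q k == m.

Lemma sums_to_gen_term0 j h m : in_Tinf absv h -> sums_to absv (fiber m) (gen_term q j h) 0.
Proof.
move=> Th; apply: (sums_to_approx habs) => c c0.
have [S uS sS] := Tinf_cover Th c0.
(* The large part of [h] is finitely supported, and [red_shift] matches the
   fibers of its two shifted copies term by term. *)
exists (gen_term q j (large_part absv c h)).
  move=> k; rewrite /gen_term opprD addrACA -opprD.
  by apply: (absvB_lt habs); rewrite /mulXpow; case: ifP => _;
    rewrite ?subrr ?absv0 //; apply: absv_sub_large_part.
have supp s : large_part absv c h s != 0 -> s \in S.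
  by rewrite /large_part; case: ifP => [/sS|]; rewrite ?eqxx.
apply: (sums_to_eventually habs).
exists (map (fun s => incr s j q) S ++ map (fun s => incr s j 1) S) => L uL sL.
have sLq : {subset map (fun s => incr s j q) S <= L} by move=> k kS; apply: sL; rewrite mem_cat kS.
have sL1 : {subset map (fun s => incr s j 1) S <= L}
  by move=> k kS; apply: sL; rewrite mem_cat kS orbT.
rewrite /gen_term sumrB (big_mulXpow _ uS uL supp sLq) (big_mulXpow _ uS uL supp sL1).
by rewrite (eq_bigl (fun s => fiber m (incr s j 1))) ?subrr // => s; rewrite /fiber red_shift.
Qed.

Lemma sums_to_gen_ideal0 G m : in_gen_ideal absv q G -> sums_to absv (fiber m) G 0.
Proof.
case=> l [Hl ->]; elim: l Hl => [_|[j h] l IH Hl].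
  apply: (sums_to_eventually habs); exists [::] => L _ _.
  by rewrite big1 // => k _; rewrite big_nil.
have -> : (fun k => \sum_(p <- (j, h) :: l) gen_term q p.1 p.2 k) =
    fun k => gen_term q j h k + \sum_(p <- l) gen_term q p.1 p.2 k
  by apply: funext => k; rewrite big_cons.
rewrite -[X in sums_to _ _ _ X]addr0; apply: (sums_toD habs).
  by apply: sums_to_gen_term0; apply: (Hl (j, h)); left.
by apply: IH => p hp; apply: Hl; right.
Qed.

Lemma sums_to_Iq0 u m : in_Iq absv q u -> sums_to absv (fiber m) u 0.
Proof.
case=> Tu Au; apply: (sums_to_approx habs) => c c0.
have [G [HG NG]] := Au c c0; exists G; last exact: sums_to_gen_ideal0.
move=> k; apply: le_lt_trans NG; apply: (absv_le_tnorm habs).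
by apply: (TinfB habs Tu); apply: (gen_Tinf habs HG).
Qed.

Lemma red_simplified (g : ser K) k : q_simplified q g -> g k != 0 -> red q k = k.
Proof. by move=> Sg /Sg; apply: red_id. Qed.

Lemma sums_to_simplified (g : ser K) m : q_simplified q g -> sums_to absv (fiber m) g (g m).
Proof.
move=> Sg; apply: (sums_to_eventually habs); exists [:: m] => L uL sL.
have supp k : (if fiber m k then g k else 0) != 0 -> k = m.
  rewrite /fiber; case: ifP => [/eqP <- gk|_]; last by rewrite eqxx.
  by rewrite (red_simplified Sg gk).
rewrite big_mkcond (big_supp_uniq xpredT uL (isT : uniq [:: m])); first last.
- by move=> k /supp ->; rewrite mem_head.
- by move=> k /supp ->; apply: sL; rewrite mem_head.
rewrite big_seq1 /fiber; case: eqP => // nm.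
by apply/esym/eqP/negPn/negP => /(red_simplified Sg)/nm.
Qed.

Lemma sums_to_rep (f g : ser K) m : q_simplified q g -> in_Iq absv q (fun k => f k - g k) ->
  sums_to absv (fiber m) f (g m).
Proof.
move=> Sg Ifg; have := sums_toD habs (sums_to_Iq0 m Ifg) (sums_to_simplified m Sg).
by rewrite add0r; under eq_fun do rewrite subrK.
Qed.

End Fibers.

Section Representative.
Variables (R : realType) (K : fieldType) (absv : K -> R).
Hypothesis habs : nonarch_absval absv.
Variable q : nat.
Hypothesis hq : (2 <= q)%N.

Lemma gen_ideal_mono_red a k :
  in_gen_ideal absv q (fun m => mono a k m - mono a (red q k) m).
Proof.
suff reduced_above n k' : (forall l, (n <= l)%N -> (expo k' l <= q.-1)%N) ->
    in_gen_ideal absv q (fun m => mono a k' m - mono a (red q k') m).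
  by have [N HN] := expo_fin k; apply: (reduced_above N) => l /HN ->.
elim: n k' => [|n IHn] k' hk'.
  rewrite red_id => [|j]; last exact: hk'.
  have -> : (fun m => mono a k' m - mono a k' m) = fun _ => 0 by apply: funext => m; rewrite subrr.
  exact: gen_ideal0.
move: {2}(expo k' n) (erefl (expo k' n)) => e; elim/ltn_ind: e k' hk' => e IHe k' hk' ek'.
have [small|large] := leqP e q.-1.
  by apply: IHn => l; rewrite leq_eqVlt => /orP[/eqP <-|/hk' //]; rewrite ek'.
have qe : (q <= expo k' n)%N by rewrite ek'; lia.
(* [(X_n^q - X_n) X^(k' - q e_n) = X^k' - X^k''] lowers the n-th exponent by
   [q - 1] without changing [red]. *)
pose k'' := incr (decr k' n q) n 1.
have red_k'' : red q k'' = red q k' by rewrite /k'' -red_shift // incr_decr.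
have -> : (fun m => mono a k' m - mono a (red q k') m) =
    fun m => gen_term q n (mono a (decr k' n q)) m + (mono a k'' m - mono a (red q k'') m).
  by apply: funext => m; rewrite gen_term_mono incr_decr // red_k'' addrA subrK.
apply: gen_idealD; first by apply: gen_ideal_gen_term; apply: Tinf_mono.
apply: (IHe (e - q.-1)%N); first by lia.
  by move=> l nl; rewrite /k'' /= (_ : (l == n) = false) ?hk' //; apply/eqP; lia.
by rewrite /k'' expo_incr /= eqxx; lia.
Qed.

Section FromFiberSums.
Variables (f : ser K) (rho : mon -> K).
Hypotheses (Tf : in_Tinf absv f) (Hrho : forall m, sums_to absv (fiber q m) f (rho m)).

Definition fiber_rep : ser K := fun m => if red q m == m then rho m else 0.

Lemma Tinf_fiber_rep : in_Tinf absv fiber_rep.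
Proof.
apply/in_TinfP => c c0; have [S uS sS] := Tinf_cover Tf c0.
exists (map (red q) S) => m; rewrite /fiber_rep; case: ifP => [_ hm|_]; last first.
  by rewrite absv0 // (lt_geF c0).
apply/negPn/negP => mS; have := sums_to_cover habs (Hrho m) c0 uS sS.
rewrite big1_seq ?sub0r ?absvN // ?ltNge ?hm // => k /andP[/eqP rk kS].
by move: mS; rewrite -rk map_f.
Qed.

Lemma fiber_rep_simplified : q_simplified q fiber_rep.
Proof.
by move=> m; rewrite /fiber_rep; case: ifP => [/eqP <- _ j|_]; [apply: redn_le | rewrite eqxx].
Qed.

Lemma Iq_sub_fiber_rep : in_Iq absv q (fun k => f k - fiber_rep k).
Proof.
split; first by apply: (TinfB habs Tf); apply: Tinf_fiber_rep.
move=> eps e0; have c0 : 0 < eps / 2 by rewrite divr_gt0.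
have [S uS sS] := Tinf_cover Tf c0.
exists (fun m => \sum_(k <- S) (mono (f k) k m - mono (f k) (red q k) m)); split.
  by apply: gen_ideal_sum => k; apply: gen_ideal_mono_red.
apply: (@le_lt_trans _ _ (eps / 2)); last by lra.
apply: tnorm_le => m; apply: ltW; rewrite sumrB big_mono //.
have -> : \sum_(k <- S) mono (f k) (red q k) m = \sum_(k <- S | fiber q m k) f k.
  by rewrite [RHS]big_mkcond; apply: eq_bigr => k _; rewrite /mono /fiber eq_sym.
have -> : f m - fiber_rep m - ((if m \in S then f m else 0) - \sum_(k <- S | fiber q m k) f k)
    = (f m - (if m \in S then f m else 0)) + (\sum_(k <- S | fiber q m k) f k - fiber_rep m).
  by ring.
apply: (absvD_lt habs).
  case: ifP => mS; first by rewrite subrr absv0.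
  by rewrite subr0 ltNge; apply: contraFN mS => /sS.
rewrite /fiber_rep; case: ifP => [_|/negP nm]; first by apply: (sums_to_cover habs (Hrho m)) => //.
rewrite big_pred0 ?subr0 ?absv0 // => k; apply/negP => /eqP rk; apply: nm.
by rewrite -rk red_idem.
Qed.

End FromFiberSums.

Lemma simplified_rep_exists f : complete_absval absv -> in_Tinf absv f ->
  exists g, [/\ in_Tinf absv g, q_simplified q g & in_Iq absv q (fun k => f k - g k)].
Proof.
move=> hcomp Tf.
have /choice [rho Hrho] : forall m, exists rho, sums_to absv (fiber q m) f rho.
  by move=> m; apply: sums_to_exists.
exists (fiber_rep rho); split; first exact: Tinf_fiber_rep Tf Hrho.
  exact: fiber_rep_simplified.
exact: Iq_sub_fiber_rep Tf Hrho.
Qed.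

End Representative.

Theorem lemma6p1 (R : realType) (K : fieldType) (absv : K -> R) (q : nat) :
  is_local_field absv q ->
  (forall f : ser K, in_Tinf absv f ->
     exists! g : ser K,
       [/\ in_Tinf absv g, q_simplified q g & in_Iq absv q (fun k => f k - g k)]) /\
  (forall f g : ser K, in_Tinf absv f -> in_Tinf absv g -> q_simplified q g ->
     in_Iq absv q (fun k => f k - g k) ->
     res_norm absv q f = tnorm absv g).
Proof.
case=> habs _ hcomp hres; have hq := residue_size_ge2 habs hres.
split=> [f Tf | f g Tf _ Sg Ifg].
  have [g [Tg Sg Ifg]] := simplified_rep_exists habs hq hcomp Tf.
  exists g; split=> // g' [_ Sg' Ifg']; apply: funext => m.
  have H1 := sums_to_rep habs hq m Sg Ifg; have H2 := sums_to_rep habs hq m Sg' Ifg'.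
  exact: (sums_to_unique habs H1 H2).
apply: inf_attained.
  exists (fun k => g k - f k); last by congr tnorm; apply: funext => k; rewrite addrC subrK.
  have -> : (fun k => g k - f k) = (fun k => - (f k - g k)) by apply: funext => k; rewrite opprB.
  by apply: IqN.
move=> _ [h Ih <-]; apply: (tnorm_le_sums_to habs (P := fiber q)).
  by apply: TinfD => //; case: Ih.
by move=> m; rewrite -[g m]addr0; apply: (sums_toD habs); [apply: sums_to_rep | apply: sums_to_Iq0].
Qed.
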